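(* Let $G\subset\mathbb{R}^n$ be a convex body and $u\in\mathbb{S}^{n-1}$. For $t>0$ let $$C_t=\{x\in G: u\cdot x\ge h_G(u)-t\},\qquad S_t=G\cap\{x\in\mathbb{R}^n: u\cdot x=h_G(u)-t\}.$$ Then: (1) $d_{\mathcal H}(C_t,S_t)\ge t$; (2) $d_{\mathcal H}(C_t,S_t)\to 0$ as $t\to 0$; (3) $\mathrm{Vol}(G+C_t)-\mathrm{Vol}(G+S_t)\le 2^n\,\mathrm{Vol}(C_t)$.
   Context: A convex body is a compact convex set with non-empty interior. $h_G(u)=\max\{y\cdot u: y\in G\}$ is the support function. $d_{\mathcal H}$ is the Hausdorff distance, sums are Minkowski sums and $\mathrm{Vol}$ is Lebesgue measure. *)

From HB Require Import structures.
From mathcomp Require Import all_boot all_order all_algebra.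
From mathcomp Require Import all_classical all_reals all_analysis.
Set Implicit Arguments. Unset Strict Implicit. Unset Printing Implicit Defensive.
Import Order.TTheory GRing.Theory Num.Theory numFieldNormedType.Exports.
Local Open Scope classical_set_scope.
Local Open Scope ring_scope.

Section Defs.
Variables (R : realType) (n : nat).
Local Notation V := 'rV[R]_n.

Definition dotp (x y : V) : R := \sum_(i < n) x 0 i * y 0 i.
Definition enorm (x : V) : R := Num.sqrt (dotp x x).

Definition convex (A : set V) : Prop :=
  forall x y (l : R), A x -> A y -> 0 <= l -> l <= 1 -> A (l *: x + (1 - l) *: y).
Definition convex_body (G : set V) : Prop :=
  convex G /\ compact G /\ (interior G !=set0).

Definition support_fun (G : set V) (u : V) : R := sup [set dotp y u | y in G].

Definition minkowski_sum (A B : set V) : set V := [set a + b | a in A & b in B].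

(* Euclidean distance from a point to a set (+oo for the empty set) and
   Hausdorff distance, valued in the extended reals *)
Definition dist_pt (x : V) (B : set V) : \bar R :=
  ereal_inf [set (enorm (x - b))%:E | b in B].
Definition hausdorff (A B : set V) : \bar R :=
  Order.max (ereal_sup [set dist_pt a B | a in A])
            (ereal_sup [set dist_pt b A | b in B]).

(* Lebesgue (outer) measure on R^n: infimum of the total volume of countable
   covers by closed boxes [a_k, b_k] with a_k <= b_k coordinatewise. *)
Definition box (a b : V) : set V := [set x | forall i, a 0 i <= x 0 i <= b 0 i].
Definition box_vol (a b : V) : R := \prod_(i < n) (b 0 i - a 0 i).
Definition vol (A : set V) : \bar R :=
  ereal_inf [set (\sum_(k <oo) (box_vol (ab k).1 (ab k).2)%:E)%E
            | ab in [set ab : nat -> V * V |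
                     (forall k i, (ab k).1 0 i <= (ab k).2 0 i) /\
                     A `<=` \bigcup_k box (ab k).1 (ab k).2]].

Definition cap_set (G : set V) (u : V) (t : R) : set V :=
  [set x | G x /\ support_fun G u - t <= dotp u x].
Definition sect_set (G : set V) (u : V) (t : R) : set V :=
  [set x | G x /\ dotp u x = support_fun G u - t].
End Defs.

(** The cap [C_t] lies within the slab of width [t] below the supporting
hyperplane, while a point of [C_t] close to that hyperplane is at distance
almost [t] from the section [S_t]; this gives (1).  Conversely, fix [x0] in [G]
at depth [m] below the hyperplane: each point [a] of [C_t] is joined to [x0]
by a segment of [G] meeting the hyperplane of [S_t] at distance at most
[t/m |a - x0|] from [a], which gives (2).  For (3), let [g] in [G] and [c] in
[C_t].  If [g] lies in [C_t] too, then [g + c] is twice the midpoint of [g]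
and [c], a point of [C_t]; otherwise the segment [[g, c]] crosses the
hyperplane of [S_t] at some [s], and [g + c = (g + c - s) + s] with
[g + c - s] on the same segment.  Hence [G + C_t] is covered by [G + S_t]
and [2 C_t], whose volume is [2^n Vol(C_t)]. *)
From HB Require Import structures.
From mathcomp Require Import all_boot all_order all_algebra.
From mathcomp Require Import all_classical all_reals all_analysis.
From mathcomp Require Import lra ring.
Import Order.TTheory GRing.Theory Num.Theory numFieldNormedType.Exports.
Local Open Scope classical_set_scope.
Local Open Scope ring_scope.

Section Euclid.
Set Implicit Arguments. Unset Strict Implicit.
Variables (R : realType) (n : nat).
Implicit Types (a : R) (x y z u : 'rV[R]_n).

Lemma dotpC x y : dotp x y = dotp y x.
Proof. by apply: eq_bigr => i _; rewrite mulrC. Qed.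

Lemma dotpDr x y z : dotp x (y + z) = dotp x y + dotp x z.
Proof. by rewrite /dotp -big_split; apply: eq_bigr => i _; rewrite !mxE mulrDr. Qed.

Lemma dotpZr a x y : dotp x (a *: y) = a * dotp x y.
Proof. by rewrite /dotp mulr_sumr; apply: eq_bigr => i _; rewrite !mxE mulrCA. Qed.

Lemma dotpBr x y z : dotp x (y - z) = dotp x y - dotp x z.
Proof. by rewrite dotpDr -scaleN1r dotpZr mulN1r. Qed.

Lemma dotpBl x y z : dotp (x - y) z = dotp x z - dotp y z.
Proof. by rewrite dotpC dotpBr !(dotpC z). Qed.

Lemma dotpZl a x y : dotp (a *: x) y = a * dotp x y.
Proof. by rewrite dotpC dotpZr dotpC. Qed.

Lemma dotp_ge0 x : 0 <= dotp x x.
Proof. by apply: sumr_ge0 => i _; rewrite -expr2 sqr_ge0. Qed.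

Lemma sqr_coord_le_dotp x i : x 0 i ^+ 2 <= dotp x x.
Proof.
rewrite /dotp (bigD1 i) //= expr2 lerDl.
by apply: sumr_ge0 => j _; rewrite -expr2 sqr_ge0.
Qed.

Lemma enorm_ge0 x : 0 <= enorm x.
Proof. exact: sqrtr_ge0. Qed.

Lemma enormZ a x : enorm (a *: x) = `|a| * enorm x.
Proof.
by rewrite /enorm dotpZl dotpZr mulrA -expr2 sqrtrM ?sqrtr_sqr // sqr_ge0.
Qed.

Lemma enorm0 : enorm (0 : 'rV[R]_n) = 0.
Proof. by rewrite -(scale0r (0 : 'rV[R]_n)) enormZ normr0 mul0r. Qed.

Lemma enorm_le_mx_norm x : enorm x <= n%:R * mx_norm x.
Proof.
set M := mx_norm x; have M0 : 0 <= M := normr_ge0 x.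
have dotp_le : dotp x x <= (n%:R * M) ^+ 2.
  apply: (@le_trans _ _ (\sum_(i < n) M ^+ 2)).
    apply: ler_sum => i _.
    have xiM : `|x 0 i| <= M.
      by rewrite /M mx_normrE; apply: (le_bigmax _ (fun ij => `|x ij.1 ij.2|) (0, i)).
    by rewrite expr2 (le_trans (ler_norm _)) // normrM ler_pM.
  rewrite big_const_ord iter_addr_0 exprMn -[_ *+ n]mulr_natl ler_wpM2r ?sqr_ge0 //.
  by case: n {x M M0} => [|k]; rewrite ?expr0n // -natrX ler_nat leq_pmulr.
rewrite /enorm -(@ger0_norm _ (n%:R * M)) ?mulr_ge0 // -sqrtr_sqr.
by rewrite ler_sqrt ?sqr_ge0.
Qed.

Lemma compact_mx_norm_bounded (K : set 'rV[R]_n) :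
  compact K -> exists M, forall x, K x -> mx_norm x <= M.
Proof.
move=> /compact_bounded[M [_ hM]]; exists (M + 1) => x Kx.
by apply: hM x Kx; rewrite ltrDl.
Qed.

Section UnitVector.
Variable u : 'rV[R]_n.
Hypothesis u1 : enorm u = 1.

Lemma dotp_unit : dotp u u = 1.
Proof. by rewrite -(sqr_sqrtr (dotp_ge0 u)) -/(enorm u) u1 expr1n. Qed.

(* Cauchy-Schwarz, from [0 <= |v - (u.v) u|^2 = |v|^2 - (u.v)^2]. *)
Lemma dotp_unit_le_enorm v : dotp u v <= enorm v.
Proof.
set c := dotp u v; have := dotp_ge0 (v - c *: u).
rewrite !(dotpBl, dotpBr, dotpZl, dotpZr) dotp_unit (dotpC v u) -/c => h0.
have c2 : c ^+ 2 <= dotp v v by rewrite expr2; lra.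
by apply: (le_trans (ler_norm c)); rewrite -sqrtr_sqr ler_sqrt ?dotp_ge0.
Qed.

Lemma mx_norm_unit_le1 : mx_norm u <= 1.
Proof.
rewrite mx_normrE; apply: bigmax_le => // -[i j] _ /=.
by rewrite (ord1 i) -sqrtr_sqr -sqrtr1 ler_sqrt // -dotp_unit sqr_coord_le_dotp.
Qed.

End UnitVector.
End Euclid.

Section Volume.
Set Implicit Arguments. Unset Strict Implicit.
Variables (R : realType) (n : nat).
Implicit Types (A B : set 'rV[R]_n).

Local Notation cover_sum ab :=
  (\sum_(k <oo) (box_vol (ab k).1 (ab k).2)%:E)%E.

Lemma box_vol_ge0 (a b : 'rV[R]_n) : (forall i, a 0 i <= b 0 i) -> 0 <= box_vol a b.
Proof. by move=> ab; apply: prodr_ge0 => i _; rewrite subr_ge0. Qed.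

Lemma vol_ge0 A : (0 <= vol A)%E.
Proof.
apply: le_ereal_inf_tmp => _ [ab [abP _] <-].
by apply: nneseries_ge0 => k _ _; rewrite lee_fin box_vol_ge0.
Qed.

Lemma vol_neqNy A : vol A != -oo%E.
Proof. by rewrite -ltNye (lt_le_trans ltNy0 (vol_ge0 A)). Qed.

Lemma le_vol A B : A `<=` B -> (vol A <= vol B)%E.
Proof.
move=> AB; apply: ereal_inf_le_tmp => _ [ab [abP coverB] <-].
by exists ab => //; split => //; apply: subset_trans coverB.
Qed.

Lemma vol_scale_le (c : R) A : 0 < c ->
  (vol [set c *: x | x in A] <= (c ^+ n)%:E * vol A)%E.
Proof.
move=> c0; rewrite /vol -ereal_inf_pZl ?exprn_gt0 //.
apply: le_ereal_inf_tmp => _ [_ [ab [abP coverA] <-] <-].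
set cab := fun k => (c *: (ab k).1, c *: (ab k).2).
have cabP k i : (cab k).1 0 i <= (cab k).2 0 i by rewrite /= !mxE ler_pM2l // abP.
have cab_vol k : box_vol (cab k).1 (cab k).2 = c ^+ n * box_vol (ab k).1 (ab k).2.
  have -> : c ^+ n = \prod_(i < n) c by rewrite prodr_const card_ord.
  rewrite /box_vol -big_split /=.
  by apply: eq_bigr => i _; rewrite !mxE mulrBr.
have -> : ((c ^+ n)%:E * cover_sum ab)%E = cover_sum cab.
  rewrite -nneseriesZl; last by move=> k _; rewrite lee_fin box_vol_ge0.
  by apply: eq_eseriesr => k _; rewrite cab_vol EFinM.
apply: ereal_inf_lbound; exists cab => //; split => // _ [x /coverA [k _ xk] <-].
by exists k => // i; rewrite /= !mxE !ler_pM2l //; apply: xk.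
Qed.

(* Interleave near-optimal covers of [A] and [B]: even indices cover [A],
   odd ones cover [B]. *)
Lemma vol_setU_le A B : (vol (A `|` B) <= vol A + vol B)%E.
Proof.
case EA: (vol A) (vol_ge0 A) => [a| |] // _; last by rewrite addye ?leey // vol_neqNy.
case EB: (vol B) (vol_ge0 B) => [b| |] // _; last by rewrite addey ?leey.
apply/lee_addgt0Pr => e e0.
have /ereal_inf_lt[_ [ca [caP coverA] <-] caS] : (vol A < (a + e / 2)%:E)%E.
  by rewrite EA lte_fin ltrDl divr_gt0.
have /ereal_inf_lt[_ [cb [cbP coverB] <-] cbS] : (vol B < (b + e / 2)%:E)%E.
  by rewrite EB lte_fin ltrDl divr_gt0.
pose c k := if odd k then cb k./2 else ca k./2.
have cP k i : (c k).1 0 i <= (c k).2 0 i by rewrite /c; case: odd.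
have c_sum N : (\sum_(0 <= k < N.*2) (box_vol (c k).1 (c k).2)%:E =
    \sum_(0 <= k < N) (box_vol (ca k).1 (ca k).2)%:E +
    \sum_(0 <= k < N) (box_vol (cb k).1 (cb k).2)%:E)%E.
  elim: N => [|N IH]; first by rewrite !big_geq // adde0.
  rewrite doubleS !big_nat_recr //= IH /c /= odd_double /= doubleK uphalf_double.
  by rewrite -addeA addeACA.
have -> : (a%:E + b%:E + e%:E = (a + e / 2)%:E + (b + e / 2)%:E)%E.
  by rewrite -!EFinD; congr _%:E; lra.
apply: le_trans (leeD (ltW caS) (ltW cbS)).
apply: (@le_trans _ _ (cover_sum c)).
  apply: ereal_inf_lbound; exists c => //; split => // x [/coverA|/coverB] [k _ xk].
    by exists k.*2 => //; rewrite /c odd_double doubleK.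
  by exists k.*2.+1 => //; rewrite /c /= odd_double uphalf_double.
apply: lime_le; first by apply: is_cvg_nneseries => k _ _; rewrite lee_fin box_vol_ge0.
apply: nearW => N.
apply: (@le_trans _ _ (\sum_(0 <= k < N.*2) (box_vol (c k).1 (c k).2)%:E)%E).
  apply: ereal_nondecreasing_series; last by rewrite -addnn leq_addr.
  by move=> k _ _; rewrite lee_fin box_vol_ge0.
rewrite c_sum; apply: leeD; apply: nneseries_lim_ge => k _ _.
all: by rewrite lee_fin box_vol_ge0.
Qed.

End Volume.

Section CapAndSection.
Set Implicit Arguments. Unset Strict Implicit.
Variables (R : realType) (n : nat).
Implicit Types (G B : set 'rV[R]_n) (x b u : 'rV[R]_n) (t : R).

Lemma dist_pt_le x B b : B b -> (dist_pt x B <= (enorm (x - b))%:E)%E.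
Proof. by move=> Bb; apply: ereal_inf_lbound; exists b. Qed.

Lemma sect_subset_cap G u t : sect_set G u t `<=` cap_set G u t.
Proof. by move=> x [Gx ux]; split; rewrite // ux. Qed.

Lemma dist_pt_sect_ge G u t x : enorm u = 1 ->
  ((dotp u x - (support_fun G u - t))%:E <= dist_pt x (sect_set G u t))%E.
Proof.
move=> u1; apply: le_ereal_inf_tmp => _ [s [_ us] <-].
by rewrite lee_fin -us -dotpBr dotp_unit_le_enorm.
Qed.

Lemma minkowski_cap_subset G u t : convex G ->
  minkowski_sum G (cap_set G u t) `<=`
  minkowski_sum G (sect_set G u t) `|` [set 2 *: x | x in cap_set G u t].
Proof.
move=> cvxG _ [g Gg [c [Gc hc] <-]]; set h := support_fun G u - t in hc *.
have [hg|hg] := lerP h (dotp u g).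
  right; exists ((1 / 2) *: g + (1 - 1 / 2) *: c).
    split; first by apply: cvxG => //; lra.
    by rewrite dotpDr !dotpZr -/h; lra.
  by apply/rowP => i; rewrite !mxE; field.
left; set d := dotp u c - dotp u g; have d0 : 0 < d by rewrite /d; lra.
set l := (dotp u c - h) / d.
have ld : l * d = dotp u c - h by rewrite /l divfK ?gt_eqF.
have l0 : 0 <= l by apply: divr_ge0; lra.
have l1 : l <= 1 by rewrite /l ler_pdivrMr // mul1r /d; lra.
exists (l *: c + (1 - l) *: g); first exact: cvxG.
exists (l *: g + (1 - l) *: c); last by apply/rowP => i; rewrite !mxE; ring.
split; first exact: cvxG.
by rewrite dotpDr !dotpZr -/h; move: ld; rewrite /d; lra.
Qed.

Lemma vol_minkowski_cap_le G u t : convex G ->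
  (vol (minkowski_sum G (cap_set G u t)) - vol (minkowski_sum G (sect_set G u t))
     <= (2 ^+ n)%:E * vol (cap_set G u t))%E.
Proof.
move=> cvxG; set S := minkowski_sum G (sect_set G u t).
have : (vol (minkowski_sum G (cap_set G u t)) <=
        vol S + (2 ^+ n)%:E * vol (cap_set G u t))%E.
  apply: le_trans (le_vol (minkowski_cap_subset cvxG)) _.
  by apply: le_trans (vol_setU_le _ _) _; rewrite leeD2l // vol_scale_le.
by case: (vol S) (vol_ge0 S) => [r _|_|//]; [rewrite leeBlDl | rewrite addeNy leNye].
Qed.

End CapAndSection.

Section ConvexBody.
Set Implicit Arguments. Unset Strict Implicit.
Variables (R : realType) (n : nat) (G : set 'rV[R]_n) (u : 'rV[R]_n).
Hypotheses (cbG : convex_body G) (u1 : enorm u = 1).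

Local Notation h := (support_fun G u).

Let G_bounded : exists M, forall x, G x -> mx_norm x <= M.
Proof. by case: cbG => _ [/compact_mx_norm_bounded]. Qed.

Let support_has_sup : has_sup [set dotp y u | y in G].
Proof.
have [_ [_ [x /nbhs_singleton Gx]]] := cbG; have [M GM] := G_bounded.
split; first by exists (dotp x u), x.
exists (n%:R * M) => _ [y Gy <-]; rewrite dotpC.
apply: le_trans (dotp_unit_le_enorm u1 y) _; apply: le_trans (enorm_le_mx_norm y) _.
by rewrite ler_wpM2l ?GM.
Qed.

Lemma dotp_le_support x : G x -> dotp u x <= h.
Proof.
by move=> Gx; rewrite dotpC; apply: ub_le_sup; [case: support_has_sup | exists x].
Qed.

Lemma support_adherent e : 0 < e -> exists2 x, G x & h - e < dotp u x.
Proof.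
move=> e0; have [_ [x Gx <-]] := sup_adherent e0 support_has_sup.
by exists x; rewrite // dotpC.
Qed.

Lemma exists_below_support : exists2 x0, G x0 & dotp u x0 < h.
Proof.
have [_ [_ [x ix]]] := cbG; have /nbhs_ballP[e /= e0 ballG] := ix.
exists (x - (e / 2) *: u).
  apply: ballG; rewrite -ball_normE /ball_ /= opprB addrC addrNK normrZ.
  rewrite gtr0_norm ?divr_gt0 //.
  apply: le_lt_trans (_ : e / 2 < e); last by lra.
  by rewrite -[leRHS]mulr1 ler_wpM2l ?mx_norm_unit_le1 ?divr_ge0 ?ltW.
rewrite dotpBr dotpZr dotp_unit // mulr1.
by apply: lt_le_trans (dotp_le_support (nbhs_singleton ix)); lra.
Qed.

Lemma hausdorff_cap_sect_ge t : 0 < t ->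
  (t%:E <= hausdorff (cap_set G u t) (sect_set G u t))%E.
Proof.
move=> t0; rewrite /hausdorff le_max; apply/orP; left.
apply/lee_addgt0Pr => e e0.
have min0 : 0 < Num.min e t by rewrite lt_min e0.
have [a Ga ha] := support_adherent min0.
have mine : Num.min e t <= e by rewrite ge_min lexx.
have mint : Num.min e t <= t by rewrite ge_min lexx orbT.
have Ca : cap_set G u t a by split => //; lra.
apply: (@le_trans _ _ (dist_pt a (sect_set G u t) + e%:E)%E).
  by apply: le_trans (leeD2r _ (dist_pt_sect_ge _ _ _ u1)); rewrite -EFinD lee_fin; lra.
by rewrite leeD2r //; apply: ereal_sup_ubound; exists a.
Qed.

Lemma dist_cap_sect_le x0 t a : G x0 -> 0 < t < h - dotp u x0 ->
  cap_set G u t a ->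
  (dist_pt a (sect_set G u t) <= (enorm (a - x0) / (h - dotp u x0) * t)%:E)%E.
Proof.
move=> Gx0 /andP[t0 tm] [Ga ha]; set m := h - dotp u x0 in tm *.
have [cvxG _] := cbG; have := dotp_le_support Ga.
set d := dotp u a - dotp u x0 => ah.
have dm : d <= m by rewrite /d /m; lra.
have d0 : 0 < d by rewrite /d /m in tm *; lra.
set l := (m - t) / d.
have ld : l * d = m - t by rewrite /l divfK ?gt_eqF.
have l0 : 0 <= l by rewrite divr_ge0; lra.
have l1 : l <= 1 by rewrite /l ler_pdivrMr // mul1r /d /m; lra.
have lm : l * d <= l * m by rewrite ler_wpM2l.
have lt : 1 - l <= t / m by rewrite ler_pdivlMr; lra.
have Ss : sect_set G u t (l *: a + (1 - l) *: x0).
  split; first exact: cvxG.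
  rewrite dotpDr !dotpZr; move: ld; rewrite /d /m; lra.
apply: le_trans (dist_pt_le a Ss) _.
have -> : a - (l *: a + (1 - l) *: x0) = (1 - l) *: (a - x0).
  by apply/rowP => i; rewrite !mxE; ring.
by rewrite enormZ ger0_norm ?subr_ge0 // lee_fin mulrAC mulrC -mulrA ler_wpM2l ?enorm_ge0.
Qed.

Lemma hausdorff_cap_sect_le x0 t D : G x0 -> 0 < t < h - dotp u x0 ->
  (forall a, G a -> enorm (a - x0) <= D) ->
  (hausdorff (cap_set G u t) (sect_set G u t) <= (D / (h - dotp u x0) * t)%:E)%E.
Proof.
move=> Gx0 /[dup] /andP[t0 tm] t_range aD.
have m0 : 0 < h - dotp u x0 by lra.
rewrite /hausdorff ge_max; apply/andP; split.
  apply: ge_ereal_sup => _ [a Ca <-]; apply: le_trans (dist_cap_sect_le Gx0 t_range Ca) _.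
  by rewrite lee_fin !ler_pM2r ?invr_gt0 // aD //; case: Ca.
apply: ge_ereal_sup => _ [b Sb <-].
rewrite (le_trans (dist_pt_le b (sect_subset_cap Sb))) // subrr enorm0 lee_fin.
have D0 : 0 <= D := le_trans (enorm_ge0 _) (aD x0 Gx0).
by rewrite !mulr_ge0 ?invr_ge0 // ltW.
Qed.

Lemma hausdorff_cap_sect_cvg0 :
  hausdorff (cap_set G u t) (sect_set G u t) @[t --> 0^'+] --> 0%E.
Proof.
have [x0 Gx0 x0h] := exists_below_support; have [M GM] := G_bounded.
set m := h - dotp u x0; have m0 : 0 < m by rewrite subr_gt0.
set D := n%:R * (M + M).
have aD a : G a -> enorm (a - x0) <= D.
  move=> Ga; apply: le_trans (enorm_le_mx_norm _) _; rewrite ler_wpM2l //.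
  by apply: le_trans (ler_mx_norm_add _ _) _; rewrite mx_normN lerD ?GM.
apply: (@squeeze_cvge _ _ _ R (fun _ => 0%E) _ (fun t => (D / m * t)%:E)).
- near=> t.
  have t0 : 0 < t by near: t; exact: nbhs_right_gt.
  have tm : t < m by near: t; exact: nbhs_right_lt.
  apply/andP; split.
    by rewrite (le_trans _ (hausdorff_cap_sect_ge t0)) // lee_fin ltW.
  by apply: hausdorff_cap_sect_le Gx0 _ aD; rewrite t0 tm.
- exact: cvg_cst.
- apply: cvg_EFin; first by near=> t.
  apply: cvg_at_right_filter; rewrite -[X in _ --> X](mulr0 (D / m)).
  by apply: cvgM; [exact: cvg_cst | exact: cvg_id].
Unshelve. all: by end_near.
Qed.

End ConvexBody.

Theorem lemma4p2 (R : realType) (n : nat) (G : set 'rV[R]_n) (u : 'rV[R]_n) :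
  convex_body G -> enorm u = 1 ->
  [/\ (forall t : R, 0 < t -> (t%:E <= hausdorff (cap_set G u t) (sect_set G u t))%E),
      hausdorff (cap_set G u t) (sect_set G u t) @[t --> 0^'+] --> 0%E
    & (forall t : R, 0 < t ->
        (vol (minkowski_sum G (cap_set G u t)) - vol (minkowski_sum G (sect_set G u t))
         <= (2 ^+ n)%:E * vol (cap_set G u t))%E)].
Proof.
move=> cbG u1; split.
- exact: hausdorff_cap_sect_ge.
- exact: hausdorff_cap_sect_cvg0.
- by move=> t _; apply: vol_minkowski_cap_le; case: cbG.
Qed.
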